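(* Let $n\ge3$ and let $f$ be a $\gamma_{tr3}(P_3\square P_n)$-function such that the number of vertices $v$ with $f(v)=\emptyset$ is minimum among all $\gamma_{tr3}(P_3\square P_n)$-functions. Then $|f((i,j))|\le2$ for all $i\in\{0,1\}$ and $j\in\{0,1,\dots,n-1\}$.
   Context: $P_m$ denotes the directed path with vertex set $\{0,1,\dots,m-1\}$ and arcs $(i,i+1)$ for $0\le i\le m-2$. The Cartesian product $D_1\square D_2$ has vertex set $V(D_1)\times V(D_2)$, with an arc from $(x_1,y_1)$ to $(x_2,y_2)$ iff either $(x_1,x_2)$ is an arc of $D_1$ and $y_1=y_2$, or $x_1=x_2$ and $(y_1,y_2)$ is an arc of $D_2$. For a digraph $D$ and positive integer $k$, a $k$-rainbow dominating function on $D$ is $f:V(D)\to\mathcal P(\{1,\dots,k\})$ such that every $v$ with $f(v)=\emptyset$ satisfies $\bigcup_{u\in N^-(v)}f(u)=\{1,\dots,k\}$, where $N^-(v)$ is the set of in-neighbors of $v$; its weight is $\sum_v|f(v)|$. It is total if additionally the subdigraph induced by $\{v:f(v)\ne\emptyset\}$ has no isolated vertex (a vertex with neither in- nor out-neighbors in it). $\gamma_{trk}(D)$ is the minimum weight of a total $k$-rainbow dominating function, and a $\gamma_{trk}(D)$-function is one attaining it. *)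

From mathcomp Require Import all_boot.
Set Implicit Arguments. Unset Strict Implicit. Unset Printing Implicit Defensive.

Definition path_arc (m : nat) : rel 'I_m := fun a b => val b == (val a).+1.

Definition cart_arc (T1 T2 : finType) (a1 : rel T1) (a2 : rel T2) : rel (T1 * T2) :=
  fun x y => (a1 x.1 y.1 && (x.2 == y.2)) || ((x.1 == y.1) && a2 x.2 y.2).

(* k-rainbow dominating function: f : V -> subsets of {1..k} (encoded as 'I_k). *)
Definition is_kRDF (T : finType) (arc : rel T) (k : nat) (f : T -> {set 'I_k}) : Prop :=
  forall v, f v = set0 -> \bigcup_(u | arc u v) f u = [set: 'I_k].

(* Total: the subdigraph induced by nonempty-labelled vertices has no isolated vertex. *)
Definition is_total (T : finType) (arc : rel T) (k : nat) (f : T -> {set 'I_k}) : Prop :=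
  forall v, f v != set0 ->
    exists u, (f u != set0) && (arc u v || arc v u).

Definition is_TkRDF (T : finType) (arc : rel T) (k : nat) (f : T -> {set 'I_k}) : Prop :=
  is_kRDF arc f /\ is_total arc f.

Definition rdf_weight (T : finType) (k : nat) (f : T -> {set 'I_k}) : nat :=
  \sum_(v : T) #|f v|.

Definition is_gamma_trk_fun (T : finType) (arc : rel T) (k : nat) (f : T -> {set 'I_k}) : Prop :=
  is_TkRDF arc f /\ forall g : T -> {set 'I_k}, is_TkRDF arc g -> rdf_weight f <= rdf_weight g.

Definition num_empty (T : finType) (k : nat) (f : T -> {set 'I_k}) : nat :=
  #|[set v | f v == set0]|.

Definition P3Pn_arc (n : nat) : rel ('I_3 * 'I_n) := cart_arc (@path_arc 3) (@path_arc n).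

From mathcomp Require Import all_boot.
From mathcomp Require Import zify.

Set Implicit Arguments.
Unset Strict Implicit.
Unset Printing Implicit Defensive.

(* Lowering the label of a nonempty vertex v to a singleton {a} and labelling
   each empty out-neighbour of v with {a} keeps a total k-RDF.  If e is the
   number of empty out-neighbours, the weight changes by 1 + e - |f(v)| and the
   number of empty vertices drops by e.  Minimality of the weight and then of
   the number of empty vertices therefore forces |f(v)| <= max(1, e), and a
   vertex of P_3 □ P_n has at most two out-neighbours. *)

Lemma sum_mem_card (T : finType) (A : {set T}) : \sum_w (w \in A : nat) = #|A|.
Proof. by rewrite -sum1_card [RHS]big_mkcond; apply: eq_bigr => w _; case: (w \in A). Qed.

Lemma set1_neq0 (T : finType) (x : T) : [set x] != set0.
Proof. by apply/set0Pn; exists x; rewrite inE. Qed.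

Section Relabel.

Variables (T : finType) (arc : rel T) (k : nat).
Implicit Types (f : T -> {set 'I_k}) (v w : T).

Definition empty_out f v : {set T} := [set w | arc v w & f w == set0].

Definition relabel f v (a : 'I_k) : T -> {set 'I_k} :=
  fun w => if (w == v) || (w \in empty_out f v) then [set a] else f w.

Variables (f : T -> {set 'I_k}) (v : T) (a : 'I_k).
Hypothesis fv0 : f v != set0.

Let g := relabel f v a.

Lemma v_notin_empty_out : v \notin empty_out f v.
Proof. by rewrite inE (negbTE fv0) andbF. Qed.

Lemma relabel_neq0 w : f w != set0 -> g w != set0.
Proof. by rewrite /g /relabel; case: ifP => // _ _; apply: set1_neq0. Qed.

Lemma relabel_sub w : w != v -> f w \subset g w.
Proof.
rewrite /g /relabel => /negbTE ->; case: ifP => [|_]; last exact: subxx.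
by rewrite inE => /andP[_ /eqP ->]; rewrite sub0set.
Qed.

Lemma relabel_TkRDF : is_TkRDF arc f -> is_TkRDF arc g.
Proof.
move=> [dom tot]; split.
- move=> u gu0.
  have [uv uE] : u != v /\ u \notin empty_out f v.
    move: gu0; rewrite /g /relabel; case: ifP => [_ /eqP|/norP//].
    by rewrite (negbTE (set1_neq0 a)).
  have fu0 : f u = set0 by move: gu0; rewrite /g /relabel (negbTE uv) (negbTE uE).
  have vu : ~~ arc v u by move: uE; rewrite inE fu0 eqxx andbT.
  apply/eqP; rewrite eqEsubset subsetT -(dom u fu0).
  apply/bigcupsP => w wu; apply: subset_trans (relabel_sub _) (bigcup_sup _ wu).
  by apply: contraNneq vu => <-.
- move=> u gu; case: (eqVneq (f u) set0) => fu.
  + exists v; rewrite relabel_neq0 //=.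
    have uE : u \in empty_out f v.
      move: gu; rewrite /g /relabel fu; case: (eqVneq u v) => [uv|_] /=.
        by move: fv0; rewrite -uv fu eqxx.
      by case: ifP => // _; rewrite eqxx.
    by move: uE; rewrite inE => /andP[-> _].
  + by have [w /andP[fw aw]] := tot u fu; exists w; rewrite relabel_neq0.
Qed.

Lemma relabel_weight :
  rdf_weight g + #|f v| = rdf_weight f + 1 + #|empty_out f v|.
Proof.
have pointwise w :
    #|g w| + (w == v) * #|f v| = #|f w| + (w == v) + (w \in empty_out f v).
  rewrite /g /relabel; case: (eqVneq w v) => [->|_] /=.
    by rewrite (negbTE v_notin_empty_out) cards1; lia.
  case: ifP => [|_]; last by rewrite !addn0.
  by rewrite inE => /andP[_ /eqP ->]; rewrite cards1 cards0.
have sum_eqv_mul : \sum_w (w == v) * #|f v| = #|f v|.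
  by rewrite (bigD1 v) //= eqxx mul1n big1 ?addn0 // => w /negbTE ->.
have sum_eqv : \sum_w (w == v : nat) = 1.
  by rewrite (bigD1 v) //= eqxx big1 // => w /negbTE ->.
rewrite /rdf_weight -{1}sum_eqv_mul -big_split /= (eq_bigr _ (fun w _ => pointwise w)).
by rewrite !big_split /= sum_eqv sum_mem_card.
Qed.

Lemma relabel_num_empty : num_empty g + #|empty_out f v| = num_empty f.
Proof.
rewrite /num_empty -!sum_mem_card -big_split /=; apply: eq_bigr => w _.
rewrite /g /relabel !inE; case: (eqVneq w v) => [->|_] /=.
  by rewrite (negbTE fv0) andbF (negbTE (set1_neq0 a)).
case: (arc v w) => /=; last by rewrite addn0.
by case: (eqVneq (f w) set0) => [_|/negbTE ->] /=; rewrite ?(negbTE (set1_neq0 a)).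
Qed.

End Relabel.

Lemma gamma_trk_min_empty_card (T : finType) (arc : rel T) (k : nat)
    (f : T -> {set 'I_k}) :
  is_gamma_trk_fun arc f ->
  (forall g : T -> {set 'I_k}, is_gamma_trk_fun arc g -> num_empty f <= num_empty g) ->
  forall v, #|f v| <= maxn 1 #|empty_out arc f v|.
Proof.
move=> [fT fmin] fE v.
have [fv0|fv0] := eqVneq (f v) set0; first by rewrite fv0 cards0.
have [a _] := set0Pn _ fv0.
have gT := relabel_TkRDF a fv0 fT.
have Wg := relabel_weight arc a fv0.
have Eg := relabel_num_empty arc a fv0.
have := fmin _ gT.
have [lt_fE|] := ltnP #|f v| (1 + #|empty_out arc f v|); first lia.
move=> ge_fE le_W.
have gG : is_gamma_trk_fun arc (relabel arc f v a).
  by split=> // h hT; have := fmin h hT; lia.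
have := fE _ gG; lia.
Qed.

Lemma path_arc_out_card m (x : 'I_m) : #|[set y | path_arc x y]| <= 1.
Proof.
apply/card_le1_eqP => y z; rewrite !inE /path_arc => /eqP yx /eqP zx.
by apply: val_inj; rewrite /= yx zx.
Qed.

Lemma cart_arc_out_card (T1 T2 : finType) (a1 : rel T1) (a2 : rel T2) x :
  #|[set y | cart_arc a1 a2 x y]| <=
  #|[set y | a1 x.1 y]| + #|[set y | a2 x.2 y]|.
Proof.
pose S1 := [set (y, x.2) | y in [set y | a1 x.1 y]].
pose S2 := [set (x.1, y) | y in [set y | a2 x.2 y]].
have sub : [set y | cart_arc a1 a2 x y] \subset S1 :|: S2.
  apply/subsetP => -[y1 y2]; rewrite !inE /cart_arc /=.
  case/orP => [/andP[h /eqP <-]|/andP[/eqP <- h]]; apply/orP; [left|right].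
  - by apply/imsetP; exists y1; rewrite ?inE.
  - by apply/imsetP; exists y2; rewrite ?inE.
apply: leq_trans (subset_leq_card sub) _.
apply: leq_trans (leq_card_setU _ _) _.
by apply: leq_add; apply: leq_imset_card.
Qed.

Lemma P3Pn_out_card n (v : 'I_3 * 'I_n) : #|[set w | P3Pn_arc v w]| <= 2.
Proof.
apply: leq_trans (cart_arc_out_card _ _ v) _.
exact: leq_add (path_arc_out_card v.1) (path_arc_out_card v.2).
Qed.

Theorem lemma4p8 (n : nat) (hn : 3 <= n) (f : 'I_3 * 'I_n -> {set 'I_3}) :
  is_gamma_trk_fun (@P3Pn_arc n) f ->
  (forall g : 'I_3 * 'I_n -> {set 'I_3},
      is_gamma_trk_fun (@P3Pn_arc n) g -> num_empty f <= num_empty g) ->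
  forall (i : 'I_3) (j : 'I_n), val i <= 1 -> #|f (i, j)| <= 2.
Proof.
move=> fG fE i j _.
apply: leq_trans (gamma_trk_min_empty_card fG fE (i, j)) _.
rewrite geq_max /=; apply: leq_trans (P3Pn_out_card (i, j)).
by apply: subset_leq_card; apply/subsetP => w; rewrite !inE => /andP[].
Qed.
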